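(* Let $\mathcal{A}\in\mathbb{R}^{[n_1,\ldots,n_m]}$. Then $\mathcal{A}$ is $\mathbb{R}$-Hermitian decomposable if and only if $\mathcal{A}_{i_1\ldots i_m j_1\ldots j_m}=\mathcal{A}_{k_1\ldots k_m l_1\ldots l_m}$ for all indices such that $\{i_s,j_s\}=\{k_s,l_s\}$ for every $s=1,\ldots,m$.
   Context: For positive integers $n_1,\ldots,n_m$, $\mathbb{R}^{[n_1,\ldots,n_m]}$ denotes the set of real tensors $\mathcal{H}\in\mathbb{R}^{n_1\times\cdots\times n_m\times n_1\times\cdots\times n_m}$ with $\mathcal{H}_{i_1\ldots i_m j_1\ldots j_m}=\mathcal{H}_{j_1\ldots j_m i_1\ldots i_m}$ for all indices (real Hermitian tensors). For vectors $v_i$, $[v_1,\ldots,v_m]_{\otimes h}:=v_1\otimes\cdots\otimes v_m\otimes\overline{v_1}\otimes\cdots\otimes\overline{v_m}$. A tensor $\mathcal{H}\in\mathbb{R}^{[n_1,\ldots,n_m]}$ is called $\mathbb{R}$-Hermitian decomposable if $\mathcal{H}=\sum_{i=1}^r\lambda_i[u_i^1,\ldots,u_i^m]_{\otimes h}$ for some real vectors $u_i^j\in\mathbb{R}^{n_j}$ and real scalars $\lambda_i$. *)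

From HB Require Import structures.
From mathcomp Require Import all_boot all_order all_algebra.
From mathcomp Require Import reals.
Set Implicit Arguments. Unset Strict Implicit. Unset Printing Implicit Defensive.
Import Order.TTheory GRing.Theory Num.Theory.
Local Open Scope ring_scope.

Definition mindex (m : nat) (n : 'I_m -> nat) := forall s : 'I_m, 'I_(n s).

(* A real tensor in R^{n_1 x ... x n_m x n_1 x ... x n_m}:
   T i j = T_{i_1..i_m j_1..j_m}. *)
Definition tensor (R : Type) (m : nat) (n : 'I_m -> nat) :=
  mindex n -> mindex n -> R.

Definition is_real_hermitian (R : Type) (m : nat) (n : 'I_m -> nat)
  (H : tensor R n) : Prop :=
  forall i j : mindex n, H i j = H j i.

(* [v_1,...,v_m]_{(x)h} for real vectors (conjugation is the identity) *)
Definition hrank1 (R : realType) (m : nat) (n : 'I_m -> nat)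
  (v : forall s : 'I_m, 'I_(n s) -> R) : tensor R n :=
  fun i j => (\prod_(s < m) v s (i s)) * (\prod_(s < m) v s (j s)).

Definition R_hermitian_decomposable (R : realType) (m : nat) (n : 'I_m -> nat)
  (H : tensor R n) : Prop :=
  exists (r : nat) (lam : 'I_r -> R) (u : 'I_r -> forall s : 'I_m, 'I_(n s) -> R),
    forall i j : mindex n, H i j = \sum_(k < r) lam k * hrank1 (u k) i j.

From HB Require Import structures.
From mathcomp Require Import all_boot all_order all_algebra.
From mathcomp Require Import reals ring zify.
Set Implicit Arguments. Unset Strict Implicit. Unset Printing Implicit Defensive.
Import Order.TTheory GRing.Theory Num.Theory.
Local Open Scope ring_scope.

(* A rank-one term v_s(i_s) v_s(j_s), multiplied over s, only sees the
   unordered pairs {i_s, j_s}; this gives necessity.  Conversely, a tensor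
   with that symmetry equals A(k, l) at the coordinatewise sorted pair (k, l)
   of (i, j), hence A = sum_(k, l) A(k, l) prod_s [(k_s, l_s) = sort(i_s, j_s)].
   Each factor is a real combination of rank-one symmetric matrices by
   polarization, (e_a + e_b)(e_a + e_b)^T - (e_a - e_b)(e_a - e_b)^T
   = 2 (e_a e_b^T + e_b e_a^T), and expanding the product over s yields an
   R-Hermitian decomposition of A. *)

Lemma mulr_set2 (R : comPzRingType) (p : nat) (v : 'I_p -> R) (i j k l : 'I_p) :
  [set i; j] = [set k; l] -> v i * v j = v k * v l.
Proof.
move=> eq_ij_kl.
have : k \in [set i; j] by rewrite eq_ij_kl !inE eqxx.
have : l \in [set i; j] by rewrite eq_ij_kl !inE eqxx orbT.
have : i \in [set k; l] by rewrite -eq_ij_kl !inE eqxx.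
have : j \in [set k; l] by rewrite -eq_ij_kl !inE eqxx orbT.
rewrite !inE; by do 4 (case/orP => /eqP ?); subst => //; rewrite mulrC.
Qed.

Lemma sum_prod_delta (I : finType) (T_ : I -> finType) (R : comPzSemiRingType)
    (f : {dffun forall i, T_ i} -> R) (x0 : {dffun forall i, T_ i}) :
  \sum_x f x * \prod_i (x i == x0 i)%:R = f x0.
Proof.
rewrite (bigD1 x0) //= big1 ?mulr1 => [|i _]; last by rewrite eqxx.
rewrite big1 ?addr0 // => x /eqP neq_x.
have [i /negbTE neq_i] : exists i, x i != x0 i.
  apply/existsP; apply: contra_notT neq_x => /existsPn eq_x.
  by apply/ffunP => i; apply/eqP; rewrite -[_ == _]negbK eq_x.

by rewrite (bigD1 i) //= neq_i mul0r mulr0.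
Qed.

Section Polarization.
Variables (R : numFieldType) (p : nat).

Definition sort2 (x y : 'I_p) : 'I_p * 'I_p := if (x <= y)%N then (x, y) else (y, x).

Lemma set2_sort2 (x y : 'I_p) : [set (sort2 x y).1; (sort2 x y).2] = [set x; y].
Proof. by rewrite /sort2; case: leqP => //= _; rewrite setUC. Qed.

Definition polar_vec (ab : 'I_p * 'I_p) (t : bool) (x : 'I_p) : R :=
  (x == ab.1)%:R + (-1) ^+ t * (x == ab.2)%:R.

(* For a = b the minus vector vanishes and the plus vector is 2 e_a, hence the
   weight 1/4; pairs with a > b get weight 0 so only sorted pairs survive. *)
Definition polar_coef (ab : 'I_p * 'I_p) (t : bool) : R :=
  (-1) ^+ t * (if (ab.1 < ab.2)%N then 2^-1 else if ab.1 == ab.2 then 4^-1 else 0).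

Lemma polar_sort2 (ab : 'I_p * 'I_p) (x y : 'I_p) :
  \sum_(t : bool) polar_coef ab t * (polar_vec ab t x * polar_vec ab t y)
  = (ab == sort2 x y)%:R.
Proof.
case: ab => a b; rewrite big_bool /polar_coef /polar_vec /sort2 /=.
case: (leqP x y) => le_xy; case: (ltnP a b) => lt_ab; rewrite xpair_eqE -!val_eqE /=;
repeat match goal with |- context [(?u == ?v)%N] => case: (@eqP _ u v) => ? end;
by rewrite /=; try lia; field.
Qed.

End Polarization.

Section HermitianDecomposition.
Variables (R : realType) (m : nat) (n : 'I_m -> nat).

Definition pair_symmetric (A : tensor R n) : Prop :=
  forall i j k l : mindex n,
    (forall s : 'I_m, [set i s; j s] = [set k s; l s]) -> A i j = A k l.

Lemma hrank1E (v : forall s : 'I_m, 'I_(n s) -> R) i j :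
  hrank1 v i j = \prod_(s < m) (v s (i s) * v s (j s)).
Proof. by rewrite /hrank1 big_split. Qed.

Lemma hrank1_pair_symmetric (v : forall s : 'I_m, 'I_(n s) -> R) :
  pair_symmetric (hrank1 v).
Proof.
move=> i j k l eq_ij_kl; rewrite !hrank1E.
by apply: eq_bigr => s _; apply: mulr_set2.
Qed.

Lemma decomposable_pair_symmetric (A : tensor R n) :
  R_hermitian_decomposable A -> pair_symmetric A.
Proof.
move=> [r [lam [u decA]]] i j k l eq_ij_kl; rewrite !decA.
by apply: eq_bigr => x _; rewrite (hrank1_pair_symmetric _ eq_ij_kl).
Qed.

Lemma decomposable_fin (A : tensor R n) (T : finType) (lam : T -> R)
    (u : T -> forall s : 'I_m, 'I_(n s) -> R) :
  (forall i j, A i j = \sum_(x : T) lam x * hrank1 (u x) i j) ->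
  R_hermitian_decomposable A.
Proof.
move=> decA; exists #|T|, (fun k => lam (enum_val k)), (fun k => u (enum_val k)).
by move=> i j; rewrite decA big_enum_val.
Qed.

Lemma pair_symmetric_decomposable (A : tensor R n) :
  pair_symmetric A -> R_hermitian_decomposable A.
Proof.
pose P := {dffun forall s : 'I_m, 'I_(n s) * 'I_(n s)}.
pose A' (x : P) := A (fun s => (x s).1) (fun s => (x s).2).
move=> symA.
apply: (@decomposable_fin A (P * {ffun 'I_m -> bool})%type
  (fun xt => A' xt.1 * \prod_s polar_coef R (xt.1 s) (xt.2 s))
  (fun xt s => polar_vec R (xt.1 s) (xt.2 s))) => i j.
pose x0 : P := [ffun s => sort2 (i s) (j s)].
have -> : A i j = A' x0 by apply: symA => s; rewrite /x0 !ffunE set2_sort2.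
rewrite -sum_prod_delta.
under eq_bigr => x _ do under eq_bigr => s _ do rewrite ffunE -polar_sort2.
under eq_bigr => x _ do rewrite bigA_distr_bigA mulr_sumr.
rewrite pair_bigA; apply: eq_bigr => -[x t] _ /=.
by rewrite hrank1E -mulrA -big_split.
Qed.

End HermitianDecomposition.

Theorem theorem3p2 (R : realType) (m : nat) (n : 'I_m -> nat) (A : tensor R n) :
  is_real_hermitian A ->
  (R_hermitian_decomposable A <->
   forall i j k l : mindex n,
     (forall s : 'I_m, [set i s; j s] = [set k s; l s]) -> A i j = A k l).
Proof.
move=> _; split; [exact: decomposable_pair_symmetric | exact: pair_symmetric_decomposable].
Qed.
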